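(* Fix $t\in[T]$ and suppose $\|\theta^*\|_2\le L_\theta$ and $\|\widehat\theta_t-\theta^*\|_{\Sigma_t}\le\beta_t$. Let $p^*\in\mathbb{R}^{\mathcal{S}\times\mathcal{A}\times\mathcal{S}}$ be given by $p^*_{s,a,s'}=p(s'\mid s,a,\theta^* )$. Then $p^*\in\mathcal{P}_t$, where $\mathcal{P}_t$ is the set of $p\in[0,1]^{\mathcal{S}\times\mathcal{A}\times\mathcal{S}}$ such that for all $(s,a)\in\mathcal{S}\times\mathcal{A}$: $\sum_{s'\in\mathcal{S}_{s,a}}p_{s,a,s'}=1$ and $\sum_{s'\in\mathcal{S}_{s,a}}|p_{s,a,s'}-p(s'\mid s,a,\widehat\theta_t)|\le B^{1,t}_{s,a}+B^{2,t}_{s,a}$, with $B^{1,t}_{s,a}=\beta_t\sum_{s'\in\mathcal{S}_{s,a}}p(s'\mid s,a,\widehat\theta_t)\big\|\varphi(s,a,s')-\sum_{s''\in\mathcal{S}_{s,a}}p(s''\mid s,a,\widehat\theta_t)\varphi(s,a,s'')\big\|_{\Sigma_t^{-1}}$ and $B^{2,t}_{s,a}=3\beta_t^2\max_{s'\in\mathcal{S}_{s,a}}\|\varphi(s,a,s')\|_{\Sigma_t^{-1}}^2$.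
   Context: MNL model: finite $\mathcal{S},\mathcal{A}$; known reachable sets $\mathcal{S}_{s,a}$ and features $\varphi(s,a,s')\in\mathbb{R}^d$; $p(s'\mid s,a,\theta)=\exp(\varphi(s,a,s')^\top\theta)/\sum_{s''\in\mathcal{S}_{s,a}}\exp(\varphi(s,a,s'')^\top\theta)$ for $s'\in\mathcal{S}_{s,a}$, $0$ otherwise; $\theta^*$ is the unknown true parameter. $\widehat\theta_t\in\mathbb{R}^d$ is the online estimate and $\Sigma_t$ the positive definite matrix $\Sigma_t=\lambda I_d+\sum_{i<t}\nabla^2\ell_i(\widehat\theta_{i+1})$ ($\lambda>0$) produced by the online Newton-type estimator on the observed trajectory (with $\ell_i$ the multinomial log-loss of step $i$); $\beta_t>0$ is the confidence radius (in the paper $\beta_t=f(L_\theta,L_\varphi)\sqrt d(\log(\mathcal{U}t/\delta))^2$ for a polynomial $f$). $\|x\|_A=\sqrt{x^\top Ax}$. *)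

From HB Require Import structures.
From mathcomp Require Import all_boot all_order all_algebra.
From mathcomp Require Import reals.
From mathcomp Require Import sequences.
From mathcomp.analysis Require Import exp.
Set Implicit Arguments. Unset Strict Implicit. Unset Printing Implicit Defensive.
Import Order.TTheory GRing.Theory Num.Theory.
Local Open Scope ring_scope.

Section MNL.
Variables (R : realType) (S A : finType) (d : nat).

Definition vdot (u v : 'cV[R]_d) : R := (u^T *m v) 0 0.

Definition mnorm (M : 'M[R]_d) (x : 'cV[R]_d) : R :=
  Num.sqrt ((x^T *m M *m x) 0 0).

Definition norm2 (x : 'cV[R]_d) : R := Num.sqrt (vdot x x).

Definition posdef (M : 'M[R]_d) : Prop :=
  M^T = M /\ forall x : 'cV[R]_d, x != 0 -> 0 < (x^T *m M *m x) 0 0.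

Variables (Sr : S -> A -> {set S}) (phi : S -> A -> S -> 'cV[R]_d).

Definition mnl_p (theta : 'cV[R]_d) (s : S) (a : A) (s' : S) : R :=
  if s' \in Sr s a then
    expR (vdot (phi s a s') theta) /
    \sum_(s'' in Sr s a) expR (vdot (phi s a s'') theta)
  else 0.

Definition bonus1 (beta : R) (Sigma : 'M[R]_d) (th : 'cV[R]_d) (s : S) (a : A) : R :=
  beta * \sum_(s' in Sr s a)
    mnl_p th s a s' *
    mnorm (invmx Sigma)
      (phi s a s' - \sum_(s'' in Sr s a) mnl_p th s a s'' *: phi s a s'').

Definition bonus2 (beta : R) (Sigma : 'M[R]_d) (s : S) (a : A) : R :=
  3 * beta ^+ 2 *
  \big[Num.max/0]_(s' in Sr s a) (mnorm (invmx Sigma) (phi s a s') ^+ 2).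

Definition conf_set (beta : R) (Sigma : 'M[R]_d) (th : 'cV[R]_d)
  (p : S -> A -> S -> R) : Prop :=
  (forall s a s', 0 <= p s a s' <= 1) /\
  forall s a,
    \sum_(s' in Sr s a) p s a s' = 1 /\
    \sum_(s' in Sr s a) `|p s a s' - mnl_p th s a s'|
      <= bonus1 beta Sigma th s a + bonus2 beta Sigma s a.

End MNL.

From HB Require Import structures.
From mathcomp Require Import all_boot all_order all_algebra.
From mathcomp Require Import reals.
From mathcomp Require Import sequences.
From mathcomp.analysis Require Import exp.
From mathcomp Require Import ring lra.
Set Implicit Arguments. Unset Strict Implicit. Unset Printing Implicit Defensive.
Import Order.TTheory GRing.Theory Num.Theory.
Local Open Scope ring_scope.

(* Write q = p(. | theta_hat) and u_x = <phi(s,a,x), theta* - theta_hat>.  Then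
   p(. | theta* ) is the exponential tilt of q by v = u - E_q u, and a tilt of a
   distribution by a q-centred v moves it in l1 by at most
   E_q |v| + 2 E_q (e^v - 1 - v).  Cauchy-Schwarz for the dual norms of Sigma
   and Sigma^-1 gives |v_x| <= beta ||phi(s,a,x) - E_q phi||_{Sigma^-1}, hence
   the first term is at most B1, and u_x^2 <= K := beta^2 max ||phi||^2_{Sigma^-1}.
   If 3K >= 2 then B2 = 3K already exceeds the trivial l1 bound 2; otherwise
   |v| <= 5/3, where e^v - 1 - v <= 3/2 v^2, and E_q v^2 = Var_q u <= K. *)

Section ExpRemainder.
Variable R : realType.
Implicit Types b c x : R.

Definition exp_rem x := expR x - 1 - x.

Lemma exp_rem_ge0 x : 0 <= exp_rem x.
Proof. by rewrite /exp_rem; have := expR_ge1Dx x; lra. Qed.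

Lemma expR_le_invB x : x < 1 -> expR x <= (1 - x)^-1.
Proof.
move=> x_lt1; rewrite -[expR x]invrK -expRN lef_pV2 ?posrE ?expR_gt0 ?subr_gt0 //.
by have := expR_ge1Dx (- x); lra.
Qed.

Lemma exp_rem_le_div x : x < 1 -> exp_rem x <= x ^+ 2 / (1 - x).
Proof.
move=> x_lt1; have -> : x ^+ 2 / (1 - x) = (1 - x)^-1 - 1 - x.
  by field; rewrite subr_eq0 gt_eqF.
by rewrite /exp_rem; have := expR_le_invB x_lt1; lra.
Qed.

Lemma exp_remDD x :
  exp_rem (x + x) = x ^+ 2 + 2 * exp_rem x * (1 + x) + exp_rem x ^+ 2.
Proof. by rewrite /exp_rem expRD; ring. Qed.

Lemma exp_rem_le_double b c c' :
    0 <= b <= 1 -> 0 <= c -> 1 + 2 * c * (1 + b) + c ^+ 2 * b ^+ 2 <= 4 * c' ->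
    (forall x, `|x| <= b -> exp_rem x <= c * x ^+ 2) ->
  forall x, `|x| <= 2 * b -> exp_rem x <= c' * x ^+ 2.
Proof.
move=> b01 c_ge0 cc' rem_le x; rewrite ler_norml => /andP[xlo xhi].
have -> : x = x / 2 + x / 2 by field.
set y := x / 2; have [ylo yhi] : - b <= y /\ y <= b by rewrite /y; split; lra.
have ry_le : exp_rem y <= c * y ^+ 2 by apply: rem_le; rewrite ler_norml ylo.
have ry_ge0 := exp_rem_ge0 y; have y2_ge0 := sqr_ge0 y.
have y2_le : y ^+ 2 <= b ^+ 2 by nra.
have cy2_ge0 : 0 <= c * y ^+ 2 by rewrite mulr_ge0.
have lin_le : exp_rem y * (1 + y) <= c * (1 + b) * y ^+ 2.
  have : exp_rem y * (1 + y) <= c * y ^+ 2 * (1 + y) by apply: ler_wpM2r; lra.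
  have : c * y ^+ 2 * (1 + y) <= c * y ^+ 2 * (1 + b) by apply: ler_wpM2l; lra.
  lra.
have sq_le : exp_rem y ^+ 2 <= c ^+ 2 * b ^+ 2 * y ^+ 2.
  have : exp_rem y ^+ 2 <= (c * y ^+ 2) ^+ 2 by rewrite ler_sqr ?nnegrE.
  by have := ler_wpM2l (mulr_ge0 (sqr_ge0 c) y2_ge0) y2_le; lra.
have := ler_wpM2r y2_ge0 cc'; rewrite exp_remDD; lra.
Qed.

Lemma exp_rem_le x : `|x| <= 5 / 3 -> exp_rem x <= 3 / 2 * x ^+ 2.
Proof.
have rem0 y : `|y| <= 5 / 24 -> exp_rem y <= 13 / 10 * y ^+ 2.
  rewrite ler_norml => /andP[ylo yhi].
  apply: le_trans (exp_rem_le_div _) _; first lra.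
  rewrite ler_pdivrMr; last lra.
  by have := sqr_ge0 y; nra.
have rem1 y : `|y| <= 5 / 12 -> exp_rem y <= 11 / 10 * y ^+ 2.
  by move=> y_le; apply: (@exp_rem_le_double (5 / 24) (13 / 10) _ _ _ _ rem0); lra.
have rem2 y : `|y| <= 5 / 6 -> exp_rem y <= 11 / 10 * y ^+ 2.
  by move=> y_le; apply: (@exp_rem_le_double (5 / 12) (11 / 10) _ _ _ _ rem1); lra.
by move=> x_le; apply: (@exp_rem_le_double (5 / 6) (11 / 10) _ _ _ _ rem2); lra.
Qed.

End ExpRemainder.

Section ExpTilt.
Variables (R : realType) (I : finType) (J : {set I}) (q : I -> R).
Hypotheses (q_ge0 : forall i, i \in J -> 0 <= q i) (q_sum1 : \sum_(i in J) q i = 1).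

Lemma sum_centered (u : I -> R) :
  \sum_(i in J) q i * (u i - \sum_(j in J) q j * u j) = 0.
Proof.
under eq_bigr do rewrite mulrBr.
by rewrite sumrB -big_distrl /= q_sum1 mul1r subrr.
Qed.

Lemma sum_centered_sqr (u : I -> R) :
  \sum_(i in J) q i * (u i - \sum_(j in J) q j * u j) ^+ 2
    = \sum_(i in J) q i * u i ^+ 2 - (\sum_(j in J) q j * u j) ^+ 2.
Proof.
set m := \sum_(j in J) q j * u j.
rewrite (eq_bigr (fun i => q i * u i ^+ 2 - 2 * m * (q i * u i) + m ^+ 2 * q i));
  last by move=> i _; ring.
by rewrite big_split /= sumrB -!mulr_sumr q_sum1 -/m; ring.
Qed.

Lemma tilt_l1_dist_le (v : I -> R) : \sum_(i in J) q i * v i = 0 ->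
  \sum_(i in J) `|q i * expR (v i) / (\sum_(j in J) q j * expR (v j)) - q i|
    <= \sum_(i in J) q i * `|v i| + 2 * \sum_(i in J) q i * exp_rem (v i).
Proof.
move=> qv_sum0; set r := \sum_(i in J) q i * exp_rem (v i).
have r_ge0 : 0 <= r by apply: sumr_ge0 => i iJ; rewrite mulr_ge0 ?q_ge0 ?exp_rem_ge0.
have -> : \sum_(j in J) q j * expR (v j) = 1 + r.
  have -> : 1 + r = \sum_(j in J) (q j + q j * v j + q j * exp_rem (v j)).
    by rewrite !big_split /= q_sum1 qv_sum0 addr0.
  by apply: eq_bigr => j _; rewrite /exp_rem; ring.
have -> : \sum_(i in J) q i * `|v i| + 2 * r
    = \sum_(i in J) (q i * `|v i| + q i * exp_rem (v i) + q i * r).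
  by rewrite !big_split /= -big_distrl /= q_sum1 mul1r /r; ring.
apply: ler_sum => i iJ; have qi_ge0 := q_ge0 iJ; rewrite -!mulrDr.
have -> : q i * expR (v i) / (1 + r) - q i = q i * (v i + exp_rem (v i) - r) / (1 + r).
  by rewrite /exp_rem; field; lra.
have r1_gt0 : 0 < 1 + r by lra.
rewrite normrM normfV normrM (ger0_norm qi_ge0) (gtr0_norm r1_gt0) ler_pdivrMr //.
have tri : `|v i + exp_rem (v i) - r| <= `|v i| + exp_rem (v i) + r.
  have := ler_normB (v i + exp_rem (v i)) r; have := ler_normD (v i) (exp_rem (v i)).
  by rewrite (ger0_norm (exp_rem_ge0 _)) (ger0_norm r_ge0); lra.
apply: le_trans (ler_wpM2l qi_ge0 tri) _.
have X_ge0 : 0 <= `|v i| + exp_rem (v i) + r.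
  by have := exp_rem_ge0 (v i); have := normr_ge0 (v i); lra.
by rewrite ler_peMr ?mulr_ge0 //; lra.
Qed.

Lemma exp_rem_centered_le (u : I -> R) (K : R) :
    (forall i, i \in J -> u i ^+ 2 <= K) -> K <= 2 / 3 ->
  \sum_(i in J) q i * exp_rem (u i - \sum_(j in J) q j * u j) <= 3 / 2 * K.
Proof.
move=> u_le K_le; have var_eq := sum_centered_sqr u.
set m := \sum_(j in J) q j * u j in var_eq *.
have m2_ge0 := sqr_ge0 m.
have qu2_le : \sum_(i in J) q i * u i ^+ 2 <= K.
  rewrite -[K]mul1r -q_sum1 big_distrl /=; apply: ler_sum => i iJ.
  by apply: ler_wpM2l; [exact: q_ge0 | exact: u_le].
have var_ge0 : 0 <= \sum_(i in J) q i * (u i - m) ^+ 2.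
  by apply: sumr_ge0 => i iJ; rewrite mulr_ge0 ?q_ge0 ?sqr_ge0.
apply: le_trans (_ : _ <= \sum_(i in J) q i * (3 / 2 * (u i - m) ^+ 2)) _.
  apply: ler_sum => i iJ; apply: ler_wpM2l; first exact: q_ge0.
  apply: exp_rem_le; rewrite -ler_sqr ?nnegrE ?normr_ge0 ?divr_ge0 ?ler0n //.
  by rewrite real_normK ?num_real //; have := u_le i iJ; have := sqr_ge0 (u i + m); lra.
under eq_bigr do rewrite mulrCA.
by rewrite -mulr_sumr; lra.
Qed.

End ExpTilt.

Section DualNorm.
Variables (R : realType) (d : nat).
Implicit Types (M : 'M[R]_d) (a b x y : 'cV[R]_d).

Definition bform M a b := (a^T *m M *m b) 0 0.

Lemma bform_sym M a b : M^T = M -> bform M a b = bform M b a.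
Proof.
move=> M_sym; rewrite /bform -[in LHS](trmxK (a^T *m M *m b)) mxE.
by rewrite !trmx_mul trmxK M_sym mulmxA.
Qed.

Lemma bformBZ M a b (t : R) : bform M (b - t *: a) (b - t *: a)
  = bform M b b - t * bform M a b - t * bform M b a + t ^+ 2 * bform M a a.
Proof.
rewrite /bform !linearB /= !linearZ /= !scalerN !mulmxDl !mulNmx -!scalemxAl.
by rewrite !mxE; ring.
Qed.

Lemma bform_ge0 M x : posdef M -> 0 <= bform M x x.
Proof.
case=> _ M_pos; have [->|x_neq0] := eqVneq x 0; last exact/ltW/M_pos.
by rewrite /bform mulmx0 mxE.
Qed.

Lemma bform_CauchySchwarz M a b : posdef M -> bform M a b ^+ 2 <= bform M a a * bform M b b.
Proof.
move=> M_pd; have [M_sym M_pos] := M_pd.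
have [->|a_neq0] := eqVneq a 0.
  by rewrite /bform trmx0 !mul0mx mxE expr0n mul0r.
(* evaluate at the minimiser of [t |-> bform M (b - t *: a) (b - t *: a)] *)
have := bform_ge0 (b - bform M a b / bform M a a *: a) M_pd.
rewrite bformBZ (bform_sym b a M_sym); have := M_pos a a_neq0.
set X := bform M a b; set Y := bform M b b; set Z := bform M a a => Z_gt0 Q_ge0.
have : 0 <= Z * (Y - X / Z * X - X / Z * X + (X / Z) ^+ 2 * Z) by rewrite mulr_ge0 // ltW.
have -> : Z * (Y - X / Z * X - X / Z * X + (X / Z) ^+ 2 * Z) = Z * Y - X ^+ 2.
  by field; rewrite gt_eqF.
lra.
Qed.

Lemma posdef_unitmx M : posdef M -> M \in unitmx.
Proof.
case=> _ M_pos; rewrite unitmxE unitfE; apply/negP => /det0P[x x_neq0 xM0].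
have : x^T != 0 by apply: contra x_neq0 => /eqP x0; rewrite -[x]trmxK x0 trmx0.
by move/M_pos; rewrite trmxK xM0 mul0mx mxE ltxx.
Qed.

Lemma mnorm_ge0 M x : 0 <= mnorm M x.
Proof. exact: sqrtr_ge0. Qed.

Lemma vdot_le_mnorm M x y : posdef M ->
  `|vdot x y| <= mnorm (invmx M) x * mnorm M y.
Proof.
move=> M_pd; have [M_sym _] := M_pd; have M_unit := posdef_unitmx M_pd.
rewrite /mnorm; set a := invmx M *m x.
have -> : vdot x y = bform M a y.
  by rewrite /bform /vdot /a trmx_mul trmx_inv M_sym -!mulmxA mulKmx.
have -> : (x^T *m invmx M *m x) 0 0 = bform M a a.
  rewrite /bform /a trmx_mul trmx_inv M_sym -!mulmxA (mulmxA M) mulmxV //.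
  by rewrite mul1mx.
rewrite -(sqrtrM _ (bform_ge0 a M_pd)) -(sqrtr_sqr (bform M a y)).
by rewrite ler_sqrt ?mulr_ge0 ?bform_ge0 ?bform_CauchySchwarz.
Qed.

Lemma vdotBl x y z : vdot (x - y) z = vdot x z - vdot y z.
Proof. by rewrite /vdot linearB /= mulmxBl !mxE. Qed.

Lemma vdotBr x y z : vdot x (y - z) = vdot x y - vdot x z.
Proof. by rewrite /vdot mulmxBr !mxE. Qed.

Lemma vdot_suml (I : finType) (J : {set I}) (c : I -> R) (f : I -> 'cV[R]_d) z :
  vdot (\sum_(j in J) c j *: f j) z = \sum_(j in J) c j * vdot (f j) z.
Proof.
rewrite /vdot linear_sum /= mulmx_suml summxE; apply: eq_bigr => j _.
by rewrite linearZ /= -scalemxAl mxE.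
Qed.

End DualNorm.

Section MNL.
Variables (R : realType) (S A : finType) (d : nat).
Variables (Sr : S -> A -> {set S}) (phi : S -> A -> S -> 'cV[R]_d).
Implicit Types (th : 'cV[R]_d) (s : S) (a : A).

Local Notation p := (mnl_p Sr phi).

Definition mnl_partition th s a := \sum_(s' in Sr s a) expR (vdot (phi s a s') th).

Lemma mnl_partition_gt0 th s a : Sr s a != set0 -> 0 < mnl_partition th s a.
Proof.
case/set0Pn => s' s'_in; rewrite /mnl_partition (bigD1 s') //=.
by rewrite ltr_wpDr ?expR_gt0 // sumr_ge0 // => x _; apply: expR_ge0.
Qed.

Lemma mnl_pE th s a s' : s' \in Sr s a ->
  p th s a s' = expR (vdot (phi s a s') th) / mnl_partition th s a.
Proof. by rewrite /mnl_p => ->. Qed.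

Lemma mnl_p_ge0 th s a s' : 0 <= p th s a s'.
Proof.
rewrite /mnl_p; case: ifP => // _.
by rewrite divr_ge0 ?expR_ge0 // sumr_ge0 // => x _; apply: expR_ge0.
Qed.

Lemma mnl_p_le1 th s a s' : p th s a s' <= 1.
Proof.
case: (boolP (s' \in Sr s a)) => [s'_in|s'_out]; last by rewrite /mnl_p (negPf s'_out).
have Z_gt0 : 0 < mnl_partition th s a by apply: mnl_partition_gt0; apply/set0Pn; exists s'.
rewrite mnl_pE // ler_pdivrMr // mul1r /mnl_partition (bigD1 s') //=.
by rewrite lerDl sumr_ge0 // => x _; apply: expR_ge0.
Qed.

Lemma mnl_p_sum1 th s a : Sr s a != set0 -> \sum_(s' in Sr s a) p th s a s' = 1.
Proof.
move=> Sr_ne; rewrite (eq_bigr _ (fun x => @mnl_pE th s a x)) -big_distrl /=.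
by rewrite mulfV // gt_eqF // mnl_partition_gt0.
Qed.

Lemma mnl_l1_dist_le2 th th' s a : Sr s a != set0 ->
  \sum_(s' in Sr s a) `|p th' s a s' - p th s a s'| <= 2.
Proof.
move=> Sr_ne.
apply: le_trans (_ : _ <= \sum_(x in Sr s a) (p th' s a x + p th s a x)) _.
  apply: ler_sum => x _; apply: le_trans (ler_normB _ _) _.
  by rewrite !ger0_norm ?mnl_p_ge0.
by rewrite big_split /= !mnl_p_sum1 //; lra.
Qed.

Section Tilt.
Variables (th th' : 'cV[R]_d) (s : S) (a : A).
Hypothesis Sr_ne : Sr s a != set0.

Local Notation q := (p th s a).
Local Notation u x := (vdot (phi s a x) (th' - th)).

(* The shift [c] cancels in the ratio. *)
Lemma mnl_p_tilt (c : R) s' : s' \in Sr s a ->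
  p th' s a s' = q s' * expR (u s' - c) / \sum_(x in Sr s a) q x * expR (u x - c).
Proof.
pose k := expR (- c) / mnl_partition th s a.
have k_neq0 : k != 0 by rewrite mulf_neq0 ?invr_eq0 ?gt_eqF ?expR_gt0 ?mnl_partition_gt0.
have tilt x : x \in Sr s a -> q x * expR (u x - c) = expR (vdot (phi s a x) th') * k.
  move=> x_in; rewrite mnl_pE // /k vdotBr !expRD !expRN.
  by field; rewrite !gt_eqF ?expR_gt0 ?mnl_partition_gt0.
move=> s'_in; rewrite tilt // (eq_bigr _ tilt) -big_distrl /= -/(mnl_partition th' s a).
by rewrite mnl_pE //; field; rewrite k_neq0 gt_eqF ?mnl_partition_gt0.
Qed.

Lemma mnl_l1_dist_le :
  \sum_(x in Sr s a) `|p th' s a x - q x|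
    <= \sum_(x in Sr s a) q x * `|u x - \sum_(y in Sr s a) q y * u y|
       + 2 * \sum_(x in Sr s a) q x * exp_rem (u x - \sum_(y in Sr s a) q y * u y).
Proof.
have q_ge0 x : x \in Sr s a -> 0 <= q x by move=> _; apply: mnl_p_ge0.
have q_sum1 := mnl_p_sum1 th Sr_ne.
set m := \sum_(y in Sr s a) q y * u y.
rewrite (eq_bigr (fun x => `|q x * expR (u x - m) /
  (\sum_(y in Sr s a) q y * expR (u y - m)) - q x|)); last first.
  by move=> x x_in; rewrite -mnl_p_tilt.
exact: (tilt_l1_dist_le (v := fun x => u x - m) q_ge0 q_sum1 (sum_centered q_sum1 _)).
Qed.

End Tilt.

Section ConfidenceBound.
Variables (theta_star theta_hat : 'cV[R]_d) (Sigma : 'M[R]_d) (beta : R).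
Hypotheses (Sigma_pd : posdef Sigma)
  (theta_conf : mnorm Sigma (theta_hat - theta_star) <= beta).

Lemma vdot_conf_le x : `|vdot x (theta_star - theta_hat)| <= beta * mnorm (invmx Sigma) x.
Proof.
have -> : vdot x (theta_star - theta_hat) = - vdot x (theta_hat - theta_star).
  by rewrite !vdotBr opprB.
rewrite normrN mulrC.
apply: le_trans (vdot_le_mnorm x _ Sigma_pd) _.
by apply: ler_wpM2l; [exact: mnorm_ge0 | exact: theta_conf].
Qed.

Local Notation u s a x := (vdot (phi s a x) (theta_star - theta_hat)).

Lemma mnl_l1_dist_le_bonus s a : Sr s a != set0 ->
  \sum_(s' in Sr s a) `|p theta_star s a s' - p theta_hat s a s'|
    <= bonus1 Sr phi beta Sigma theta_hat s a + bonus2 Sr phi beta Sigma s a.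
Proof.
move=> Sr_ne; set q := p theta_hat s a.
set m := fun x => mnorm (invmx Sigma) (phi s a x).
set K := beta ^+ 2 * \big[Num.max/0]_(x in Sr s a) m x ^+ 2.
have q_ge0 x : x \in Sr s a -> 0 <= q x by move=> _; apply: mnl_p_ge0.
have q_sum1 : \sum_(x in Sr s a) q x = 1 by apply: mnl_p_sum1.
have u_sqr_le x : x \in Sr s a -> u s a x ^+ 2 <= K.
  move=> x_in; rewrite -real_normK ?num_real //.
  apply: le_trans (_ : _ <= (beta * m x) ^+ 2) _.
    have u_le : `|u s a x| <= beta * m x := vdot_conf_le _.
    by rewrite ler_sqr ?nnegrE ?(le_trans (normr_ge0 _) u_le).
  rewrite exprMn; apply: ler_wpM2l; first exact: sqr_ge0.
  exact: (le_bigmax_cond 0 (fun y => m y ^+ 2) x_in).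
have centered_le_bonus1 :
    \sum_(x in Sr s a) q x * `|u s a x - \sum_(y in Sr s a) q y * u s a y|
      <= bonus1 Sr phi beta Sigma theta_hat s a.
  rewrite /bonus1 mulr_sumr; apply: ler_sum => x x_in; rewrite mulrCA.
  apply: ler_wpM2l; first exact: q_ge0.
  by rewrite -vdot_suml -vdotBl vdot_conf_le.
have bonus2E : bonus2 Sr phi beta Sigma s a = 3 * K by rewrite /bonus2 /K mulrA.
rewrite bonus2E; have [K_big|K_small] := lerP 2 (3 * K).
  have : 0 <= \sum_(x in Sr s a) q x * `|u s a x - \sum_(y in Sr s a) q y * u s a y|.
    by apply: sumr_ge0 => x x_in; rewrite mulr_ge0 ?q_ge0.
  by have := mnl_l1_dist_le2 theta_hat theta_star Sr_ne; lra.
have K_le : K <= 2 / 3 by lra.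
have /= := exp_rem_centered_le (u := fun x => u s a x) q_ge0 q_sum1 u_sqr_le K_le.
by have := mnl_l1_dist_le theta_hat theta_star Sr_ne; lra.
Qed.

End ConfidenceBound.
End MNL.

Theorem lemma2 (R : realType) (S A : finType) (d : nat)
  (Sr : S -> A -> {set S}) (phi : S -> A -> S -> 'cV[R]_d)
  (Sr_nonempty : forall s a, Sr s a != set0)
  (theta_star theta_hat : 'cV[R]_d) (Sigma : 'M[R]_d) (L_theta beta : R)
  (Hbeta : 0 < beta) (HSigma : posdef Sigma)
  (Hnorm : norm2 theta_star <= L_theta)
  (Hconf : mnorm Sigma (theta_hat - theta_star) <= beta) :
  conf_set Sr phi beta Sigma theta_hat (fun s a s' => mnl_p Sr phi theta_star s a s').
Proof.
split=> [s a s'|s a]; first by rewrite mnl_p_ge0 mnl_p_le1.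
split; first exact: mnl_p_sum1.
exact: (mnl_l1_dist_le_bonus _ HSigma Hconf (Sr_nonempty s a)).
Qed.
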